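(* Let $n\ge2$, $\lambda>0$, and let $\mathbf{r}\in\mathbb{R}^n$ have pairwise distinct coordinates, with $r_{(n)}=\max_ir_i$, $r_{(1)}=\min_ir_i$ attained at indices $i^\star$ and $j^\star$ respectively. Then $$\sup_{(\boldsymbol{\pi},\mathbf{q})\in\Delta_n\times\Delta_n}\Big\{\langle\mathbf{q}-\boldsymbol{\pi},\mathbf{r}\rangle-\lambda H(\mathbf{q}\|\boldsymbol{\pi})\Big\}=\lambda\log\Big(\frac{e^{r_{(n)}/\lambda}-e^{r_{(1)}/\lambda}}{r_{(n)}-r_{(1)}}\Big)-\frac{e^{r_{(n)}/\lambda}r_{(1)}-e^{r_{(1)}/\lambda}r_{(n)}}{e^{r_{(n)}/\lambda}-e^{r_{(1)}/\lambda}}+\lambda\log\lambda-\lambda,$$ and the supremum is attained at $(\boldsymbol{\pi}^\star,\mathbf{q}^\star)$ where $$\pi^\star_{i^\star}=\frac{e^{r_{i^\star}/\lambda}-e^{r_{j^\star}/\lambda}-\lambda^{-1}(r_{i^\star}-r_{j^\star})e^{r_{j^\star}/\lambda}}{\lambda^{-1}(r_{i^\star}-r_{j^\star})(e^{r_{i^\star}/\lambda}-e^{r_{j^\star}/\lambda})},\quad\pi^\star_{j^\star}=1-\pi^\star_{i^\star},\quad\pi^\star_k=0\ (k\notin\{i^\star,j^\star\}),$$ and $q^\star_i=\pi^\star_ie^{r_i/\lambda}/\sum_j\pi^\star_je^{r_j/\lambda}$ for $i=1,\dots,n$.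
   Context: $\Delta_n=\{\mathbf{x}\in[0,1]^n:\sum_ix_i=1\}$; $\supp(\mathbf{x})=\{i:x_i>0\}$. Relative entropy: $H(\mathbf{q}\|\boldsymbol{\pi})=\sum_{i\in\supp(\mathbf{q})}q_i\log(q_i/\pi_i)$ if $\supp(\mathbf{q})\subseteq\supp(\boldsymbol{\pi})$ and $+\infty$ otherwise. *)

From HB Require Import structures.
From mathcomp Require Import all_boot all_order all_algebra.
From mathcomp Require Import all_classical all_reals all_analysis.
Set Implicit Arguments. Unset Strict Implicit. Unset Printing Implicit Defensive.
Import Order.TTheory GRing.Theory Num.Theory.
Local Open Scope ring_scope.
Local Open Scope classical_set_scope.

Definition simplex (R : realType) (n : nat) : set ('I_n -> R) :=
  [set x | (forall i, 0 <= x i <= 1) /\ \sum_(i < n) x i = 1].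

Definition relH (R : realType) (n : nat) (q pi : 'I_n -> R) : \bar R :=
  if [forall i, (0 < q i) ==> (0 < pi i)]
  then ((\sum_(i < n | 0 < q i) q i * ln (q i / pi i))%:E)%E
  else (+oo)%E.

Definition objective (R : realType) (n : nat) (lam : R) (r pi q : 'I_n -> R)
  : \bar R :=
  ((\sum_(i < n) (q i - pi i) * r i)%:E - lam%:E * relH q pi)%E.

Definition optimal_value (R : realType) (n : nat) (lam : R) (r : 'I_n -> R)
  (istar jstar : 'I_n) : R :=
  let a := r istar in let b := r jstar in
  let A := expR (a / lam) in let B := expR (b / lam) in
  lam * ln ((A - B) / (a - b)) - (A * b - B * a) / (A - B)
  + lam * ln lam - lam.

Definition pi_star (R : realType) (n : nat) (lam : R) (r : 'I_n -> R)
  (istar jstar : 'I_n) : 'I_n -> R :=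
  let a := r istar in let b := r jstar in
  let A := expR (a / lam) in let B := expR (b / lam) in
  let p := (A - B - lam^-1 * (a - b) * B) / (lam^-1 * (a - b) * (A - B)) in
  fun k => if k == istar then p else if k == jstar then 1 - p else 0.

Definition q_star (R : realType) (n : nat) (lam : R) (r : 'I_n -> R)
  (istar jstar : 'I_n) : 'I_n -> R :=
  let p := pi_star lam r istar jstar in
  fun i => p i * expR (r i / lam) / \sum_(j < n) p j * expR (r j / lam).

From HB Require Import structures.
From mathcomp Require Import all_boot all_order all_algebra.
From mathcomp Require Import all_classical all_reals all_analysis.
From mathcomp Require Import ring lra.
Import Order.TTheory GRing.Theory Num.Theory.
Local Open Scope ring_scope.
Local Open Scope classical_set_scope.

(* For fixed [pi], the Gibbs variational principle bounds [<q, r> - lam H(q || pi)]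
   by [lam ln Z(pi)], where [Z(pi) = sum_i pi_i e^(r_i / lam)], with equality at the
   tilt [q_i ~ pi_i e^(r_i / lam)]; so it remains to maximize
   [lam ln Z(pi) - <pi, r>].  Convexity of [exp] bounds [Z(pi)] by an affine
   function of the mean [m = <pi, r>] (the chord of [x |-> e^(x / lam)] between
   the extreme rewards [b <= m <= a]), and the tangent bound
   [ln x <= x / c - 1 + ln c] at [c = lam (e^(a/lam) - e^(b/lam)) / (a - b)]
   removes the dependence on [m].  Both inequalities are tight for the
   distribution on the two extreme indices whose partition sum equals [c],
   which is [pi_star]. *)

Lemma ln_le_tangent {R : realType} {x c : R} : 0 < x -> 0 < c ->
  ln x <= x / c - 1 + ln c.
Proof.
move=> x0 c0; have xc0 : 0 < x / c by rewrite divr_gt0.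
have -> : ln x = ln (x / c) + ln c by rewrite -lnM ?posrE // mulfVK // gt_eqF.
by have := expR_ge1Dx (ln (x / c)); rewrite lnK ?posrE //; lra.
Qed.

Lemma expR_le_chord {R : realType} {lam a b x : R} :
  0 < lam -> b <= x <= a ->
  (a - b) * expR (x / lam)
    <= (x - b) * expR (a / lam) + (a - x) * expR (b / lam).
Proof.
move=> lam0 /andP[bx xa]; set E := expR (x / lam).
have tangent y : E * (1 + (y - x) / lam) <= expR (y / lam).
  have -> : y / lam = x / lam + (y - x) / lam by rewrite -mulrDl; congr (_ / _); ring.
  by rewrite expRD ler_pM2l ?expR_gt0 ?expR_ge1Dx.
have -> : (a - b) * E
    = (x - b) * (E * (1 + (a - x) / lam)) + (a - x) * (E * (1 + (b - x) / lam)).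
  by field; rewrite gt_eqF.
by apply: lerD; apply: ler_wpM2l; rewrite ?subr_ge0 ?tangent.
Qed.

Lemma entropy_term_le {R : realType} (lam x p q c : R) :
  0 < lam -> 0 < p -> 0 < q -> 0 < c ->
  q * x - lam * (q * ln (q / p))
    <= lam * (p * expR (x / lam) / c - q + q * ln c).
Proof.
move=> lam0 p0 q0 c0; set y := p * expR (x / lam) / q.
have y0 : 0 < y by rewrite divr_gt0 ?mulr_gt0 ?expR_gt0.
have lny : lam * (q * ln y) = q * x - lam * (q * ln (q / p)).
  rewrite /y !ln_div ?posrE ?mulr_gt0 ?expR_gt0 // lnM ?posrE ?expR_gt0 // expRK.
  by field; rewrite gt_eqF.
rewrite -lny ler_pM2l //.
have -> : p * expR (x / lam) / c - q + q * ln c = q * (y / c - 1 + ln c).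
  by rewrite /y; field; rewrite !gt_eqF.
by rewrite ler_pM2l // ln_le_tangent.
Qed.

Lemma simplex_ge0 {R : realType} {n : nat} {x : 'I_n -> R} :
  simplex x -> forall i, 0 <= x i.
Proof. by case=> + _ i => /(_ i) /andP[]. Qed.

Lemma simplex_of_ge0 {R : realType} {n : nat} (x : 'I_n -> R) :
  (forall i, 0 <= x i) -> \sum_(i < n) x i = 1 -> simplex x.
Proof.
move=> x_ge0 x_sum1; split => // i; rewrite x_ge0 -x_sum1 (bigD1 i) //= lerDl.
exact: sumr_ge0.
Qed.

Section GibbsVariational.
Context {R : realType} {n : nat} (lam : R) (r : 'I_n -> R).
Hypothesis lam_gt0 : 0 < lam.

Definition partition_sum (pi : 'I_n -> R) : R :=
  \sum_(i < n) pi i * expR (r i / lam).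

Definition gibbs_tilt (pi : 'I_n -> R) : 'I_n -> R :=
  fun i => pi i * expR (r i / lam) / partition_sum pi.

Definition reduced_objective (pi : 'I_n -> R) : R :=
  lam * ln (partition_sum pi) - \sum_(i < n) pi i * r i.

Lemma partition_sum_gt0 { pi : 'I_n -> R } : simplex pi -> 0 < partition_sum pi.
Proof.
move=> spi; have pi_ge0 i : 0 <= pi i * expR (r i / lam).
  by rewrite mulr_ge0 ?expR_ge0 ?(simplex_ge0 spi).
rewrite lt_def sumr_ge0 // andbT psumr_neq0 //.
have [|i /andP[_ pi_gt0]] := @psumr_neq0P _ _ xpredT pi (fun i _ => simplex_ge0 spi i).
  by case: spi => _ ->; exact/eqP/oner_neq0.
by apply/hasP; exists i; rewrite ?mem_index_enum ?mulr_gt0 ?expR_gt0.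
Qed.

Lemma gibbs_variational_le { pi q : 'I_n -> R } : simplex pi -> simplex q ->
  (forall i, 0 < q i -> 0 < pi i) ->
  \sum_(i < n) q i * r i - lam * \sum_(i < n | 0 < q i) q i * ln (q i / pi i)
    <= lam * ln (partition_sum pi).
Proof.
move=> spi sq supp; have Z0 := partition_sum_gt0 spi.
set Z := partition_sum pi.
have term_le i : q i * r i - lam * (if 0 < q i then q i * ln (q i / pi i) else 0)
    <= lam * (pi i * expR (r i / lam) / Z - q i + q i * ln Z).
  case: ifP => [q_gt0|q_le0]; first by apply: entropy_term_le => //; apply: supp.
  have -> : q i = 0 by apply/eqP; rewrite eq_le simplex_ge0 // andbT leNgt q_le0.
  rewrite !mul0r mulr0 subr0 addr0 subr0.
  by rewrite mulr_ge0 ?(ltW lam_gt0) ?divr_ge0 ?(ltW Z0) ?mulr_ge0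
             ?expR_ge0 ?(simplex_ge0 spi).
rewrite [X in lam * X]big_mkcond mulr_sumr -sumrB.
apply: (le_trans (ler_sum _ (fun i _ => term_le i))).
rewrite -mulr_sumr !big_split /= sumrN -!mulr_suml.
by case: sq => _ ->; rewrite divff ?gt_eqF // mul1r subrr add0r.
Qed.

Lemma gibbs_tilt_simplex { pi : 'I_n -> R } : simplex pi -> simplex (gibbs_tilt pi).
Proof.
move=> spi; have Z0 := partition_sum_gt0 spi; apply: simplex_of_ge0.
  by move=> i; rewrite divr_ge0 ?mulr_ge0 ?expR_ge0 ?(simplex_ge0 spi) ?ltW.
by rewrite -mulr_suml divff ?gt_eqF.
Qed.

Lemma gibbs_tilt_support pi i : simplex pi -> 0 < gibbs_tilt pi i -> 0 < pi i.
Proof.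
move=> spi; rewrite lt_def (lt_def 0 (pi i)) (simplex_ge0 spi) andbT => /andP[+ _].
by apply: contra; rewrite /gibbs_tilt => /eqP->; rewrite !mul0r.
Qed.

Lemma objective_le { pi q : 'I_n -> R } : simplex pi -> simplex q ->
  (objective lam r pi q <= (reduced_objective pi)%:E)%E.
Proof.
move=> spi sq; rewrite /objective /relH; case: ifPn => [/forallP supp|_].
  rewrite -EFinM -EFinB lee_fin /reduced_objective.
  have := gibbs_variational_le spi sq (fun i => implyP (supp i)).
  have -> : \sum_(i < n) (q i - pi i) * r i
      = \sum_(i < n) q i * r i - \sum_(i < n) pi i * r i.
    by rewrite -sumrB; apply: eq_bigr => i _; rewrite mulrBl.
  lra.
by rewrite gt0_muley ?lte_fin //= addeNy leNye.
Qed.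

Lemma objective_gibbs_tilt pi : simplex pi ->
  objective lam r pi (gibbs_tilt pi) = (reduced_objective pi)%:E.
Proof.
move=> spi; have Z0 := partition_sum_gt0 spi.
set q := gibbs_tilt pi.
have supp i : 0 < q i -> 0 < pi i by apply: gibbs_tilt_support.
rewrite /objective /relH ifT; last by apply/forallP => i; apply/implyP/supp.
rewrite -EFinM -EFinB /reduced_objective; congr EFin.
have -> : \sum_(i < n | 0 < q i) q i * ln (q i / pi i)
    = \sum_(i < n) q i * (r i / lam - ln (partition_sum pi)).
  rewrite big_mkcond; apply: eq_bigr => i _; case: ifPn => [q_gt0|].
    have pi_gt0 := supp i q_gt0.
    have -> : q i / pi i = expR (r i / lam) / partition_sum pi.
      by rewrite /q /gibbs_tilt; field; rewrite !gt_eqF.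
    by rewrite ln_div ?posrE ?expR_gt0 // expRK.
  rewrite lt_def (simplex_ge0 (gibbs_tilt_simplex spi)) andbT negbK => /eqP->.
  by rewrite mul0r.
under eq_bigr do rewrite mulrBl; rewrite sumrB.
under [X in _ - lam * X]eq_bigr do rewrite mulrBr mulrA.
rewrite sumrB -!mulr_suml -/(partition_sum pi).
by field; rewrite !gt_eqF.
Qed.

End GibbsVariational.

Lemma partition_sum_le_chord {R : realType} {n : nat} (lam a b : R)
    (r pi : 'I_n -> R) :
  0 < lam -> (forall k, b <= r k <= a) -> simplex pi ->
  (a - b) * partition_sum lam r pi
    <= (\sum_(k < n) pi k * r k - b) * expR (a / lam)
       + (a - \sum_(k < n) pi k * r k) * expR (b / lam).
Proof.
move=> lam0 r_ab spi; have [_ pi_sum1] := spi.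
set A := expR (a / lam); set B := expR (b / lam).
rewrite /partition_sum mulr_sumr.
rewrite -[in leRHS](mul1r b) -[in leRHS](mul1r a) -pi_sum1 !mulr_suml -!sumrB.
rewrite !mulr_suml -big_split /=; apply: ler_sum => k _.
have -> : (pi k * r k - pi k * b) * A + (pi k * a - pi k * r k) * B
    = pi k * ((r k - b) * A + (a - r k) * B) by ring.
by rewrite mulrCA ler_wpM2l ?(simplex_ge0 spi) ?expR_le_chord.
Qed.

Lemma reduced_objective_le {R : realType} {n : nat} (lam : R) (r pi : 'I_n -> R)
    (istar jstar : 'I_n) :
  0 < lam -> r jstar < r istar -> (forall k, r jstar <= r k <= r istar) ->
  simplex pi ->
  reduced_objective lam r pi <= optimal_value lam r istar jstar.
Proof.
move=> lam0 r_lt r_ab spi; rewrite /reduced_objective /optimal_value.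
set a := r istar; set b := r jstar; set m := \sum_(k < n) pi k * r k.
set A := expR (a / lam); set B := expR (b / lam); set Z := partition_sum lam r pi.
have ab0 : 0 < a - b by rewrite subr_gt0.
have AB0 : 0 < A - B by rewrite subr_gt0 ltr_expR ltr_pM2r ?invr_gt0.
have Z0 : 0 < Z := partition_sum_gt0 lam r spi.
set S := lam * ((A - B) / (a - b)).
have S0 : 0 < S by rewrite mulr_gt0 ?divr_gt0.
have chord : (a - b) * Z <= (m - b) * A + (a - m) * B.
  exact: partition_sum_le_chord.
have Z_S : Z / S <= (m - (A * b - B * a) / (A - B)) / lam.
  rewrite ler_pdivlMr // mulrAC ler_pdivrMr //.
  have -> : (m - (A * b - B * a) / (A - B)) * S
      = lam * (((m - b) * A + (a - m) * B) / (a - b)).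
    by rewrite /S; field; rewrite !gt_eqF.
  by rewrite mulrC ler_pM2l // ler_pdivlMr // mulrC; exact: chord.
have lnS : ln S = ln lam + ln ((A - B) / (a - b)).
  by rewrite /S lnM ?posrE ?divr_gt0.
have lnZ : ln Z <= (m - (A * b - B * a) / (A - B)) / lam - 1 + ln S.
  by have := ln_le_tangent Z0 S0; lra.
have := ler_wpM2l (ltW lam0) lnZ; rewrite lnS.
have -> : lam * ((m - (A * b - B * a) / (A - B)) / lam - 1
                 + (ln lam + ln ((A - B) / (a - b))))
    = m - (A * b - B * a) / (A - B) - lam + lam * ln lam
      + lam * ln ((A - B) / (a - b)).
  by field; rewrite !gt_eqF.
lra.
Qed.

Definition two_point {R : pzRingType} {n : nat} (i j : 'I_n) (p : R) : 'I_n -> R :=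
  fun k => if k == i then p else if k == j then 1 - p else 0.

Lemma sum_two_point {R : pzRingType} {n : nat} (i j : 'I_n) (p : R) (f : 'I_n -> R) :
  i != j -> \sum_(k < n) two_point i j p k * f k = p * f i + (1 - p) * f j.
Proof.
move=> ij; rewrite (bigD1 i) //= (bigD1 j) 1?eq_sym //= /two_point eqxx.
rewrite eq_sym (negbTE ij) eqxx big1 ?addr0 ?addrA // => k /andP[ki kj].
by rewrite (negbTE ki) (negbTE kj) mul0r.
Qed.

Lemma two_point_simplex {R : realType} {n : nat} (i j : 'I_n) (p : R) :
  i != j -> 0 <= p <= 1 -> simplex (two_point i j p).
Proof.
move=> ij /andP[p_ge0 p_le1]; apply: simplex_of_ge0.
  by move=> k; rewrite /two_point; case: ifP => // _; case: ifP => // _; rewrite subr_ge0.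
have := sum_two_point i j p (fun=> 1) ij; rewrite !mulr1 addrC subrK => <-.
by apply: eq_bigr => k _; rewrite mulr1.
Qed.

Definition tilt_weight {R : realType} (lam a b : R) : R :=
  let A := expR (a / lam) in let B := expR (b / lam) in
  (A - B - lam^-1 * (a - b) * B) / (lam^-1 * (a - b) * (A - B)).

Lemma pi_starE {R : realType} {n : nat} (lam : R) (r : 'I_n -> R) (i j : 'I_n) :
  pi_star lam r i j = two_point i j (tilt_weight lam (r i) (r j)).
Proof. by []. Qed.

(* With [t = (a - b) / lam] the weight is [(e^t - 1 - t) / (t (e^t - 1))];
   the two bounds are [1 + t <= e^t] and [1 - t <= e^-t]. *)
Lemma tilt_weight_bounds {R : realType} (lam a b : R) :
  0 < lam -> b < a -> 0 <= tilt_weight lam a b <= 1.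
Proof.
move=> lam0 ba; rewrite /tilt_weight.
set A := expR (a / lam); set B := expR (b / lam); set t := lam^-1 * (a - b).
have t0 : 0 < t by rewrite mulr_gt0 ?invr_gt0 ?subr_gt0.
set E := expR t.
have B0 : 0 < B by exact: expR_gt0.
have AE : A = B * E.
  by rewrite /A /B /E -expRD; congr expR; rewrite /t; field; rewrite gt_eqF.
have E1 : 1 + t <= E := expR_ge1Dx t.
have E2 : E * (1 - t) <= 1.
  by have := ler_wpM2l (expR_ge0 t) (expR_ge1Dx (- t)); rewrite expRxMexpNx_1.
have AB0 : 0 < A - B by rewrite AE -{2}(mulr1 B) -mulrBr mulr_gt0 // subr_gt0; lra.
have den0 : 0 < t * (A - B) by rewrite mulr_gt0.
apply/andP; split.
  rewrite divr_ge0 ?(ltW den0) //.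
  have : 0 <= B * (E - 1 - t) by apply: mulr_ge0; lra.
  rewrite AE; lra.
rewrite ler_pdivrMr // mul1r.
have : 0 <= B * (1 - E * (1 - t)) by apply: mulr_ge0; lra.
rewrite AE; lra.
Qed.

Section PiStar.
Context {R : realType} {n : nat} (lam : R) (r : 'I_n -> R) (istar jstar : 'I_n).
Hypotheses (lam_gt0 : 0 < lam) (r_lt : r jstar < r istar).

Let a := r istar.
Let b := r jstar.
Let A := expR (a / lam).
Let B := expR (b / lam).

Lemma istar_neq_jstar : istar != jstar.
Proof. by apply: contraTneq r_lt => ->; rewrite ltxx. Qed.

Lemma partition_sum_pi_star :
  partition_sum lam r (pi_star lam r istar jstar) = lam * ((A - B) / (a - b)).
Proof.
have ab0 : 0 < a - b by rewrite subr_gt0.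
have AB0 : 0 < A - B by rewrite subr_gt0 ltr_expR ltr_pM2r ?invr_gt0.
rewrite /partition_sum pi_starE sum_two_point ?istar_neq_jstar // /tilt_weight.
by rewrite -/a -/b -/A -/B; field; rewrite !gt_eqF // mulr_gt0 ?invr_gt0.
Qed.

Lemma reduced_objective_pi_star :
  reduced_objective lam r (pi_star lam r istar jstar)
    = optimal_value lam r istar jstar.
Proof.
have ab0 : 0 < a - b by rewrite subr_gt0.
have AB0 : 0 < A - B by rewrite subr_gt0 ltr_expR ltr_pM2r ?invr_gt0.
rewrite /reduced_objective partition_sum_pi_star lnM ?posrE ?divr_gt0 //.
rewrite pi_starE sum_two_point ?istar_neq_jstar // /tilt_weight /optimal_value.
by rewrite -/a -/b -/A -/B; field; rewrite !gt_eqF // mulr_gt0 ?invr_gt0.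
Qed.

End PiStar.

Lemma injective_argmin_lt_argmax {R : realType} {n : nat} {r : 'I_n -> R}
    {i j : 'I_n} :
  (1 < n)%N -> injective r -> (forall k, r k <= r i) -> (forall k, r j <= r k) ->
  r j < r i.
Proof.
move=> n_gt1 r_inj r_max r_min; rewrite lt_neqAle r_max andbT.
apply/eqP => r_ji; have all_i k : k = i.
  by apply: r_inj; apply/eqP; rewrite eq_le r_max -r_ji r_min.
have /(congr1 val) := etrans (all_i (Ordinal n_gt1)) (esym (all_i (Ordinal (ltnW n_gt1)))).
by [].
Qed.

Theorem mainTheorem17 (R : realType) (n : nat) (lam : R) (r : 'I_n -> R)
  (istar jstar : 'I_n) :
  (2 <= n)%N -> 0 < lam -> injective r ->
  (forall k, r k <= r istar) -> (forall k, r jstar <= r k) ->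
  ereal_sup [set z | exists pi q, @simplex R n pi /\ @simplex R n q /\
                                  z = objective lam r pi q]
    = (optimal_value lam r istar jstar)%:E
  /\ @simplex R n (pi_star lam r istar jstar)
  /\ @simplex R n (q_star lam r istar jstar)
  /\ objective lam r (pi_star lam r istar jstar) (q_star lam r istar jstar)
     = (optimal_value lam r istar jstar)%:E.
Proof.
move=> n_ge2 lam0 r_inj r_max r_min.
have r_lt := injective_argmin_lt_argmax n_ge2 r_inj r_max r_min.
have r_bounds k : r jstar <= r k <= r istar by rewrite r_min r_max.
have spi_star : simplex (pi_star lam r istar jstar).
  rewrite pi_starE; apply: two_point_simplex.
    exact: istar_neq_jstar r_lt.
  exact: tilt_weight_bounds.
have sq_star : simplex (q_star lam r istar jstar) by apply: gibbs_tilt_simplex.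
have value : objective lam r (pi_star lam r istar jstar) (q_star lam r istar jstar)
    = (optimal_value lam r istar jstar)%:E.
  by rewrite objective_gibbs_tilt // reduced_objective_pi_star.
split; last by [].
apply/eqP; rewrite eq_le; apply/andP; split.
  apply: ge_ereal_sup => _ [pi [q [spi [sq ->]]]].
  rewrite (le_trans (objective_le lam r lam0 spi sq)) // lee_fin.
  exact: reduced_objective_le.
by apply: ereal_sup_ubound; exists (pi_star lam r istar jstar), (q_star lam r istar jstar).
Qed.
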